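(* Suppose $r_{\min}<1$ and $\eta>\frac{r_{\min}}2$, and let $\underline\omega_\eta=\min\{\omega_i:r_i<2\eta\}$. For any constant $\varepsilon>0$ let $c_\varepsilon=\min\big\{\frac{n\eta}{(n-1)\underline\omega_\eta}-\varepsilon,\ n\eta-\varepsilon,\ 1\big\}$. Then the set $E_{c_\varepsilon}=\{(x_1,\dots,x_n)\in[0,1]^n:\max_{i,j\in\mathcal V}|x_i-x_j|\ge c_\varepsilon\}$ is finite-time robustly reachable from $[0,1]^n$ under control protocol (C3).
   Context: Fix $n\ge3$, $\mathcal V=\{1,\dots,n\}$, confidence thresholds $r_i\in(0,1]$, $r_{\min}=\min_ir_i$, belief factors $\omega_i\in(0,1)$, $\eta>0$. States $x(t)\in[0,1]^n$. Neighbor set $\mathcal N_i(t)=\{j:|x_j(t)-x_i(t)|\le r_i\}$ (contains $i$), $\Pi_{[0,1]}(y)=\min\{1,\max\{0,y\}\}$, $x_{\rm ave}(t)=\frac1n\sum_ix_i(t)$. Control protocol (C3): $x_i(t+1)=\Pi_{[0,1]}\big(\omega_ix_{\rm ave}(t)+\frac{1-\omega_i}{|\mathcal N_i(t)|}\sum_{j\in\mathcal N_i(t)}x_j(t)+u_i(t)+b_i(t)\big)$, where $\delta_i(t)\in(0,\eta)$ is a chosen parameter, $u_i(t)\in[-\eta+\delta_i(t),\eta-\delta_i(t)]$ a chosen control input, $b_i(t)\in[-\delta_i(t),\delta_i(t)]$ an arbitrary uncertainty; $\delta_i(t),u_i(t)$ may depend on $x(0),\dots,x(t)$. A set $S\subseteq[0,1]^n$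 is finite-time robustly reachable from $[0,1]^n$ under the protocol if there exist constants $T>0$ and $\varepsilon'\in(0,\eta)$, independent of $x(0)$, such that for every $x(0)\in[0,1]^n$, either $x(0)\in S$, or one can choose $\delta_i(t)\in[\varepsilon',\eta)$ and $u_i(t)\in[-\eta+\delta_i(t),\eta-\delta_i(t)]$ for $i\in\mathcal V$, $0\le t<T$, guaranteeing that for arbitrary $b_i(t)\in[-\delta_i(t),\delta_i(t)]$ there is $t\in[1,T]$ with $x(t)\in S$. *)

(* classical reals. Agents are indexed by nat, agent set V = {0,...,n-1}. *)
From Stdlib Require Import Reals Lra Lia Arith.
Open Scope R_scope.

Fixpoint sumR (n : nat) (f : nat -> R) : R :=
  match n with O => 0 | S k => sumR k f + f k end.

Fixpoint omin (n : nat) (P : nat -> bool) (f : nat -> R) : option R :=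
  match n with
  | O => None
  | S k => let m := omin k P f in
           if P k then Some (match m with None => f k | Some v => Rmin v (f k) end)
           else m
  end.

Fixpoint omax (n : nat) (f : nat -> R) : option R :=
  match n with
  | O => None
  | S k => Some (match omax k f with None => f k | Some v => Rmax v (f k) end)
  end.

Definition min_over (n : nat) (P : nat -> bool) (f : nat -> R) : R :=
  match omin n P f with Some v => v | None => 0 end.

Definition max_over (n : nat) (f : nat -> R) : R :=
  match omax n f with Some v => v | None => 0 end.

Definition r_min (n : nat) (r : nat -> R) : R := min_over n (fun _ => true) r.

Definition omega_low (n : nat) (r omega : nat -> R) (eta : R) : R :=
  min_over n (fun i => if Rlt_dec (r i) (2 * eta) then true else false) omega.

Definition c_eps (n : nat) (r omega : nat -> R) (eta eps : R) : R :=
  Rmin (Rmin (INR n * eta / ((INR n - 1) * omega_low n r omega eta) - eps)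
             (INR n * eta - eps)) 1.

Definition in_cube (n : nat) (x : nat -> R) : Prop :=
  forall i, (i < n)%nat -> 0 <= x i <= 1.

Definition spread (n : nat) (x : nat -> R) : R :=
  max_over n (fun i => max_over n (fun j => Rabs (x i - x j))).

Definition E_set (n : nat) (c : R) (x : nat -> R) : Prop :=
  in_cube n x /\ spread n x >= c.

Definition proj01 (y : R) : R := Rmin 1 (Rmax 0 y).

Definition nbr_ind (r : nat -> R) (i : nat) (x : nat -> R) (j : nat) : R :=
  if Rle_dec (Rabs (x j - x i)) (r i) then 1 else 0.

Definition nbr_card (n : nat) (r : nat -> R) (x : nat -> R) (i : nat) : R :=
  sumR n (nbr_ind r i x).

Definition nbr_sum (n : nat) (r : nat -> R) (x : nat -> R) (i : nat) : R :=
  sumR n (fun j => nbr_ind r i x j * x j).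

Definition x_ave (n : nat) (x : nat -> R) : R := sumR n x / INR n.

(* control protocol (C3): value of x_i(t+1) given x = x(t), inputs u, uncertainty b *)
Definition C3_update (n : nat) (r omega : nat -> R) (x u b : nat -> R) (i : nat) : R :=
  proj01 (omega i * x_ave n x
          + (1 - omega i) / nbr_card n r x i * nbr_sum n r x i
          + u i + b i).

(* the history x(0),...,x(t) (components of agents in V), everything else masked *)
Definition history (n t : nat) (x : nat -> nat -> R) : nat -> nat -> R :=
  fun s j => if andb (Nat.leb s t) (Nat.ltb j n) then x s j else 0.

(* A strategy is a pair of causal policies delta, u : time -> history -> agent -> R.
   "For arbitrary b" is expressed as: every trajectory that is consistent with the
   protocol for some admissible b at each step reaches Sset within [1,T]. *)
Definition robustly_reachable (n : nat) (r omega : nat -> R) (eta : R)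
    (Sset : (nat -> R) -> Prop) : Prop :=
  exists (T : nat) (eps' : R), (0 < T)%nat /\ 0 < eps' < eta /\
  forall x0 : nat -> R, in_cube n x0 ->
    Sset x0 \/
    exists delta u : nat -> (nat -> nat -> R) -> nat -> R,
      (forall t h i, (t < T)%nat -> (i < n)%nat ->
         eps' <= delta t h i < eta /\
         - eta + delta t h i <= u t h i <= eta - delta t h i) /\
      forall x : nat -> nat -> R,
        (forall i, (i < n)%nat -> x O i = x0 i) ->
        (forall t, (t < T)%nat ->
           exists b : nat -> R,
             (forall i, (i < n)%nat ->
                - delta t (history n t x) i <= b i <= delta t (history n t x) i) /\
             (forall i, (i < n)%nat ->
                x (S t) i = C3_update n r omega (x t) (u t (history n t x)) b i)) ->
        exists t, (1 <= t <= T)%nat /\ Sset (x t).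

(** Open-loop control with a constant uncertainty budget [dl] suffices. All agents are first
    pushed down by at least [eta - 2 dl] per step until they sit at 0, then lifted together to a
    common value. If [eta > 1/2], one more step pushing agent 0 up and every other agent down
    separates agents 0 and 1 to 1 and 0. Otherwise take an agent [k] with [r_k < 2 eta] and
    minimal belief factor and push [k] up and everybody else down. Once [k] is isolated it loses at
    most the fraction [omega_k (n - 1) / n] of its state per step, while the others are pulled up by
    at most [x_k / n]; while the spread stays below [c_eps], the definition of [c_eps] makes [k] rise
    and the others fall by a fixed amount per step, which cannot last. *)
From Stdlib Require Import Reals Lra Lia Classical.
Open Scope R_scope.

Lemma div_le_of_le_mul a b c : 0 < c -> a <= b * c -> a / c <= b.
Proof.
  intros Hc H. apply Rmult_le_reg_r with c; [exact Hc|].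
  unfold Rdiv. rewrite Rmult_assoc, Rinv_l, Rmult_1_r by lra. exact H.
Qed.

Lemma le_div_of_mul_le a b c : 0 < c -> b * c <= a -> b <= a / c.
Proof.
  intros Hc H. apply Rmult_le_reg_r with c; [exact Hc|].
  unfold Rdiv. rewrite Rmult_assoc, Rinv_l, Rmult_1_r by lra. exact H.
Qed.

Lemma archimedean_count a : 0 < a -> exists N : nat, (1 <= N)%nat /\ 1 <= INR N * a.
Proof.
  intros Ha. destruct (archimed_cor1 a Ha) as [N [HN HN0]]. exists N. split; [lia|].
  assert (0 < INR N) by (apply lt_0_INR; lia).
  apply Rmult_lt_compat_l with (r := INR N) in HN; [|lra].
  rewrite Rinv_r in HN; lra.
Qed.

Lemma sumR_le n F G :
  (forall j, (j < n)%nat -> F j <= G j) -> sumR n F <= sumR n G.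
Proof.
  induction n as [|m IH]; cbn [sumR]; intros H; [lra|].
  assert (sumR m F <= sumR m G) by (apply IH; intros; apply H; lia).
  specialize (H m (Nat.lt_succ_diag_r m)). lra.
Qed.

Lemma sumR_ext n F G :
  (forall j, (j < n)%nat -> F j = G j) -> sumR n F = sumR n G.
Proof.
  intros H. apply Rle_antisym; apply sumR_le; intros j Hj; rewrite H by exact Hj; lra.
Qed.

Lemma sumR_mult_l n c F : sumR n (fun j => c * F j) = c * sumR n F.
Proof. induction n as [|m IH]; cbn [sumR]; [ring|]. rewrite IH; ring. Qed.

Lemma sumR_const n c : sumR n (fun _ => c) = INR n * c.
Proof. induction n as [|m IH]; cbn [sumR]; [simpl; ring|]. rewrite IH, S_INR; ring. Qed.

Lemma sumR_le_except n F G k :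
  (k < n)%nat -> (forall j, (j < n)%nat -> j <> k -> F j <= G j) ->
  sumR n F <= sumR n G + (F k - G k).
Proof.
  induction n as [|m IH]; cbn [sumR]; intros Hk H; [lia|].
  destruct (Nat.eq_dec k m) as [->|Hkm].
  - assert (sumR m F <= sumR m G) by (apply sumR_le; intros; apply H; lia). lra.
  - assert (sumR m F <= sumR m G + (F k - G k)) by (apply IH; [lia| intros; apply H; lia]).
    specialize (H m (Nat.lt_succ_diag_r m) (not_eq_sym Hkm)). lra.
Qed.

Lemma sumR_ge_term n F k :
  (k < n)%nat -> (forall j, (j < n)%nat -> 0 <= F j) -> F k <= sumR n F.
Proof.
  intros Hk H. pose proof (sumR_le_except n (fun _ => 0) F k Hk) as Hle.
  cbv beta in Hle. rewrite sumR_const in Hle.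
  assert (INR n * 0 <= sumR n F + (0 - F k)) by (apply Hle; intros; apply H; auto). lra.
Qed.

Lemma sumR_single n F k :
  (k < n)%nat -> (forall j, (j < n)%nat -> j <> k -> F j = 0) -> sumR n F = F k.
Proof.
  intros Hk H.
  pose proof (sumR_le_except n F (fun _ => 0) k Hk) as Hle.
  pose proof (sumR_le_except n (fun _ => 0) F k Hk) as Hge.
  cbv beta in Hle, Hge. rewrite sumR_const in Hle, Hge.
  assert (sumR n F <= INR n * 0 + (F k - 0)) by (apply Hle; intros; rewrite H; auto; lra).
  assert (INR n * 0 <= sumR n F + (0 - F k)) by (apply Hge; intros; rewrite H; auto; lra).
  lra.
Qed.

Lemma omin_spec n P f :
  match omin n P f with
  | None => forall i, (i < n)%nat -> P i = false
  | Some v => exists k, (k < n)%nat /\ P k = true /\ v = f k /\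
               forall i, (i < n)%nat -> P i = true -> v <= f i
  end.
Proof.
  induction n as [|m IH]; cbn [omin]; [intros; lia|].
  destruct (P m) eqn:Pm; destruct (omin m P f) as [v|] eqn:Hm.
  - destruct IH as (k & Hk & Pk & -> & Hmin).
    destruct (Rle_dec (f k) (f m)).
    + exists k. rewrite Rmin_left by lra. repeat split; auto; try lia. intros i Hi Pi.
      destruct (Nat.eq_dec i m) as [->|]; [lra| apply Hmin; auto; lia].
    + exists m. rewrite Rmin_right by lra. repeat split; auto. intros i Hi Pi.
      destruct (Nat.eq_dec i m) as [->|]; [lra|].
      specialize (Hmin i ltac:(lia) Pi). lra.
  - exists m. repeat split; auto. intros i Hi Pi.
    destruct (Nat.eq_dec i m) as [->|]; [lra|]. rewrite IH in Pi by lia. discriminate.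
  - destruct IH as (k & Hk & Pk & -> & Hmin). exists k. repeat split; auto; try lia.
    intros i Hi Pi. destruct (Nat.eq_dec i m) as [->|]; [congruence| apply Hmin; auto; lia].
  - intros i Hi. destruct (Nat.eq_dec i m) as [->|]; auto. apply IH; lia.
Qed.

Lemma min_over_attained n P f i0 :
  (i0 < n)%nat -> P i0 = true ->
  exists k, (k < n)%nat /\ P k = true /\ min_over n P f = f k /\
            forall i, (i < n)%nat -> P i = true -> f k <= f i.
Proof.
  intros Hi0 Pi0. unfold min_over. pose proof (omin_spec n P f) as Hspec.
  destruct (omin n P f) as [v|].
  - destruct Hspec as (k & Hk & Pk & -> & Hmin). exists k; auto.
  - rewrite Hspec in Pi0 by exact Hi0. discriminate.
Qed.

Lemma max_over_ge n f i : (i < n)%nat -> f i <= max_over n f.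
Proof.
  unfold max_over. induction n as [|m IH]; intros Hi; [lia|]. cbn [omax].
  destruct (Nat.eq_dec i m) as [->|Him].
  - destruct (omax m f); [apply Rmax_r| lra].
  - specialize (IH ltac:(lia)). destruct (omax m f) eqn:E.
    + eapply Rle_trans; [exact IH| apply Rmax_l].
    + destruct m; [lia| discriminate].
Qed.

Lemma spread_ge n x i j :
  (i < n)%nat -> (j < n)%nat -> Rabs (x i - x j) <= spread n x.
Proof.
  intros Hi Hj. unfold spread.
  eapply Rle_trans; [| apply (max_over_ge _ _ i Hi)].
  apply (max_over_ge _ (fun j => Rabs (x i - x j)) j Hj).
Qed.

Lemma proj01_range y : 0 <= proj01 y <= 1.
Proof. unfold proj01, Rmin, Rmax. repeat destruct Rle_dec; lra. Qed.

Lemma proj01_ge y : Rmin 1 y <= proj01 y.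
Proof. unfold proj01, Rmin, Rmax. repeat destruct Rle_dec; lra. Qed.

Lemma proj01_le y : proj01 y <= Rmax 0 y.
Proof. unfold proj01, Rmin, Rmax. repeat destruct Rle_dec; lra. Qed.
Definition local_mean n r x i := nbr_sum n r x i / nbr_card n r x i.

Definition c3_free n r (omega : nat -> R) x i :=
  omega i * x_ave n x + (1 - omega i) * local_mean n r x i.

Definition leader_rate n (omega : nat -> R) k := omega k * (INR n - 1) / INR n.

Lemma nbr_ind_in r i x j : Rabs (x j - x i) <= r i -> nbr_ind r i x j = 1.
Proof. unfold nbr_ind. destruct Rle_dec; tauto. Qed.

Lemma nbr_ind_out r i x j : r i < Rabs (x j - x i) -> nbr_ind r i x j = 0.
Proof. unfold nbr_ind. destruct Rle_dec; [lra| reflexivity]. Qed.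

Lemma nbr_ind_cases r i x j : nbr_ind r i x j = 0 \/ nbr_ind r i x j = 1.
Proof. unfold nbr_ind. destruct Rle_dec; auto. Qed.

Lemma nbr_ind_self r i x : 0 <= r i -> nbr_ind r i x i = 1.
Proof. intros Hr. apply nbr_ind_in. rewrite Rminus_diag, Rabs_R0. exact Hr. Qed.

Lemma nbr_card_ge1 n r x i : (i < n)%nat -> 0 <= r i -> 1 <= nbr_card n r x i.
Proof.
  intros Hi Hr. unfold nbr_card. rewrite <- (nbr_ind_self r i x Hr) at 1.
  apply sumR_ge_term; [exact Hi|]. intros j _. destruct (nbr_ind_cases r i x j); lra.
Qed.

Lemma C3_update_free n r omega x u b i :
  (i < n)%nat -> 0 <= r i ->
  C3_update n r omega x u b i = proj01 (c3_free n r omega x i + u i + b i).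
Proof.
  intros Hi Hr. pose proof (nbr_card_ge1 n r x i Hi Hr).
  unfold C3_update, c3_free, local_mean. f_equal. field. lra.
Qed.

Lemma x_ave_le n x M :
  (0 < n)%nat -> (forall j, (j < n)%nat -> x j <= M) -> x_ave n x <= M.
Proof.
  intros Hn H. apply div_le_of_le_mul; [apply lt_0_INR; exact Hn|].
  rewrite Rmult_comm, <- sumR_const. exact (sumR_le n x _ H).
Qed.

Lemma x_ave_ge n x M :
  (0 < n)%nat -> (forall j, (j < n)%nat -> M <= x j) -> M <= x_ave n x.
Proof.
  intros Hn H. apply le_div_of_mul_le; [apply lt_0_INR; exact Hn|].
  rewrite Rmult_comm, <- sumR_const. exact (sumR_le n _ x H).
Qed.

Lemma local_mean_le n r x i M :
  (i < n)%nat -> 0 <= r i ->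
  (forall j, (j < n)%nat -> nbr_ind r i x j = 1 -> x j <= M) -> local_mean n r x i <= M.
Proof.
  intros Hi Hr H. apply div_le_of_le_mul; [pose proof (nbr_card_ge1 n r x i Hi Hr); lra|].
  unfold nbr_sum, nbr_card. rewrite <- sumR_mult_l.
  apply sumR_le. intros j Hj.
  destruct (nbr_ind_cases r i x j) as [E|E]; rewrite E; [lra|]. specialize (H j Hj E). lra.
Qed.

Lemma local_mean_ge n r x i M :
  (i < n)%nat -> 0 <= r i ->
  (forall j, (j < n)%nat -> M <= x j) -> M <= local_mean n r x i.
Proof.
  intros Hi Hr H. apply le_div_of_mul_le; [pose proof (nbr_card_ge1 n r x i Hi Hr); lra|].
  unfold nbr_sum, nbr_card. rewrite <- sumR_mult_l.
  apply sumR_le. intros j Hj.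
  destruct (nbr_ind_cases r i x j) as [E|E]; rewrite E; [lra|]. specialize (H j Hj). lra.
Qed.

Lemma local_mean_all n r x i :
  (forall j, (j < n)%nat -> nbr_ind r i x j = 1) -> local_mean n r x i = x_ave n x.
Proof.
  intros H. unfold local_mean, x_ave, nbr_sum, nbr_card.
  rewrite (sumR_ext n (nbr_ind r i x) (fun _ => 1)) by exact H.
  rewrite (sumR_ext n _ x) by (intros j Hj; rewrite H by exact Hj; ring).
  rewrite sumR_const, Rmult_1_r. reflexivity.
Qed.

Lemma local_mean_isolated n r x k :
  (k < n)%nat -> 0 <= r k ->
  (forall j, (j < n)%nat -> j <> k -> nbr_ind r k x j = 0) -> local_mean n r x k = x k.
Proof.
  intros Hk Hr H. unfold local_mean, nbr_sum, nbr_card.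
  rewrite !(sumR_single n _ k Hk) by (intros j Hj Hjk; rewrite H by auto; ring).
  rewrite nbr_ind_self by exact Hr. field.
Qed.

Lemma c3_free_le n r omega x i M :
  (i < n)%nat -> 0 <= r i -> 0 <= omega i <= 1 ->
  (forall j, (j < n)%nat -> x j <= M) -> c3_free n r omega x i <= M.
Proof.
  intros Hi Hr Ho H.
  pose proof (x_ave_le n x M ltac:(lia) H).
  pose proof (local_mean_le n r x i M Hi Hr (fun j Hj _ => H j Hj)).
  unfold c3_free. nra.
Qed.

Lemma c3_free_ge n r omega x i M :
  (i < n)%nat -> 0 <= r i -> 0 <= omega i <= 1 ->
  (forall j, (j < n)%nat -> M <= x j) -> M <= c3_free n r omega x i.
Proof.
  intros Hi Hr Ho H.
  pose proof (x_ave_ge n x M ltac:(lia) H).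
  pose proof (local_mean_ge n r x i M Hi Hr H).
  unfold c3_free. nra.
Qed.

(* If the leader [k] is a neighbour of [j] then, all followers lying within [r j] of each
   other, [j] sees everybody and its local mean is the global one. *)
Lemma c3_free_follower n r omega x k j Z :
  (k < n)%nat -> (j < n)%nat -> j <> k -> 0 <= omega j <= 1 -> Z <= r j ->
  (forall i, (i < n)%nat -> i <> k -> 0 <= x i <= Z) -> Z <= x k ->
  c3_free n r omega x j <= Z + (x k - Z) / INR n.
Proof.
  intros Hk Hj Hjk Ho HZr Hfoll HZk.
  assert (Hn : 0 < INR n) by (apply lt_0_INR; lia).
  assert (HZ : Z <= Z + (x k - Z) / INR n).
  { assert (0 <= (x k - Z) / INR n) by (apply le_div_of_mul_le; lra). lra. }
  assert (Have : x_ave n x <= Z + (x k - Z) / INR n).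
  { apply div_le_of_le_mul; [exact Hn|].
    pose proof (sumR_le_except n x (fun _ => Z) k Hk (fun i Hi Hik => proj2 (Hfoll i Hi Hik))).
    rewrite sumR_const in H. replace ((Z + (x k - Z) / INR n) * INR n) with (INR n * Z + (x k - Z))
      by (field; lra). exact H. }
  assert (Hloc : local_mean n r x j <= Z + (x k - Z) / INR n).
  { destruct (nbr_ind_cases r j x k) as [Hout|Hin].
    - apply Rle_trans with Z; [|exact HZ].
      apply local_mean_le; [exact Hj| pose proof (Hfoll j Hj Hjk); lra|].
      intros i Hi Hind. destruct (Nat.eq_dec i k) as [->|Hik]; [rewrite Hout in Hind; lra|].
      exact (proj2 (Hfoll i Hi Hik)).
    - rewrite local_mean_all; [exact Have|]. intros i Hi.
      destruct (Nat.eq_dec i k) as [->|Hik]; [exact Hin|]. apply nbr_ind_in.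
      pose proof (Hfoll i Hi Hik). pose proof (Hfoll j Hj Hjk).
      apply Rabs_le. lra. }
  unfold c3_free. nra.
Qed.

Lemma c3_free_leader n r omega x k :
  (k < n)%nat -> 0 <= r k -> 0 <= omega k -> 0 <= x k ->
  (forall i, (i < n)%nat -> i <> k -> 0 <= x i /\ r k < x k - x i) ->
  (1 - leader_rate n omega k) * x k <= c3_free n r omega x k.
Proof.
  intros Hk Hr Ho Hxk Hiso.
  assert (Hn : 0 < INR n) by (apply lt_0_INR; lia).
  assert (Hloc : local_mean n r x k = x k).
  { apply local_mean_isolated; auto. intros j Hj Hjk. apply nbr_ind_out.
    destruct (Hiso j Hj Hjk). rewrite Rabs_left1; lra. }
  assert (Have : x k / INR n <= x_ave n x).
  { unfold Rdiv, x_ave. apply Rmult_le_compat_r; [left; apply Rinv_0_lt_compat; exact Hn|].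
    apply sumR_ge_term; [exact Hk|]. intros j Hj.
    destruct (Nat.eq_dec j k) as [->|Hjk]; [exact Hxk| apply (Hiso j Hj Hjk)]. }
  unfold c3_free, leader_rate. rewrite Hloc.
  replace ((1 - omega k * (INR n - 1) / INR n) * x k)
    with (omega k * (x k / INR n) + (1 - omega k) * x k) by (field; lra).
  apply Rplus_le_compat_r. apply Rmult_le_compat_l; assumption.
Qed.

Definition driven n r omega (T : nat) (dl : R) (U : nat -> nat -> R) (x : nat -> nat -> R) :=
  forall t, (t < T)%nat -> exists b : nat -> R,
    (forall i, (i < n)%nat -> - dl <= b i <= dl) /\
    (forall i, (i < n)%nat -> x (S t) i = C3_update n r omega (x t) (U t) b i).

Definition plan (NA : nat) (m : R) (k : nat) (eta dl : R) (t i : nat) : R :=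
  if (t <? NA)%nat then - (eta - dl)
  else if (t =? NA)%nat then m
  else if (i =? k)%nat then eta - dl
  else - (eta - dl).

Lemma plan_reachable n r omega eta (P : (nat -> R) -> Prop) T dl NA m k :
  (0 < T)%nat -> 0 < dl < eta -> - (eta - dl) <= m <= eta - dl ->
  (forall x, in_cube n (x O) -> driven n r omega T dl (plan NA m k eta dl) x ->
     exists t, (1 <= t <= T)%nat /\ P (x t)) ->
  robustly_reachable n r omega eta P.
Proof.
  intros HT Hdl Hm Hreach. exists T, dl. split; [exact HT|]. split; [exact Hdl|].
  intros x0 Hx0. right.
  exists (fun _ _ _ => dl), (fun t _ i => plan NA m k eta dl t i). split.
  - intros t h i _ _. split; [lra|]. unfold plan.
    destruct (t <? NA)%nat; [lra|]. destruct (t =? NA)%nat; [lra|].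
    destruct (i =? k)%nat; lra.
  - intros x Hx Hsteps. apply Hreach; [intros i Hi; rewrite Hx; auto| exact Hsteps].
Qed.

Section Plan.

Variables (n : nat) (r omega : nat -> R) (eta dl : R) (NA : nat) (m : R) (k T : nat)
  (x : nat -> nat -> R).
Hypothesis r_nonneg : forall i, (i < n)%nat -> 0 <= r i.
Hypothesis omega_unit : forall i, (i < n)%nat -> 0 <= omega i <= 1.
Hypothesis dl_nonneg : 0 <= dl.
Hypothesis x_driven : driven n r omega T dl (plan NA m k eta dl) x.

Lemma plan_before t i : (t < NA)%nat -> plan NA m k eta dl t i = - (eta - dl).
Proof. intros Ht. unfold plan. destruct (Nat.ltb_spec t NA); [reflexivity| lia]. Qed.

Lemma plan_at i : plan NA m k eta dl NA i = m.
Proof. unfold plan. rewrite Nat.ltb_irrefl, Nat.eqb_refl. reflexivity. Qed.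

Lemma plan_leader t : (NA < t)%nat -> plan NA m k eta dl t k = eta - dl.
Proof.
  intros Ht. unfold plan. destruct (Nat.ltb_spec t NA); [lia|].
  destruct (Nat.eqb_spec t NA); [lia|]. rewrite Nat.eqb_refl. reflexivity.
Qed.

Lemma plan_follower t i : (NA < t)%nat -> i <> k -> plan NA m k eta dl t i = - (eta - dl).
Proof.
  intros Ht Hik. unfold plan. destruct (Nat.ltb_spec t NA); [lia|].
  destruct (Nat.eqb_spec t NA); [lia|]. destruct (Nat.eqb_spec i k); [contradiction| reflexivity].
Qed.

Lemma driven_in_cube t i : (t < T)%nat -> (i < n)%nat -> 0 <= x (S t) i <= 1.
Proof.
  intros Ht Hi. destruct (x_driven t Ht) as (b & _ & Hx).
  rewrite Hx by exact Hi. apply proj01_range.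
Qed.

Lemma driven_E_set t c :
  (t < T)%nat -> c <= spread n (x (S t)) -> E_set n c (x (S t)).
Proof. intros Ht Hc. split; [intros i Hi; exact (driven_in_cube t i Ht Hi)| lra]. Qed.

Lemma driven_lower t i a :
  (t < T)%nat -> (i < n)%nat -> a <= c3_free n r omega (x t) i ->
  Rmin 1 (a + plan NA m k eta dl t i - dl) <= x (S t) i.
Proof.
  intros Ht Hi Ha. destruct (x_driven t Ht) as (b & Hb & Hx).
  rewrite Hx, C3_update_free by auto. eapply Rle_trans; [|apply proj01_ge].
  apply Rle_min_compat_l. specialize (Hb i Hi). lra.
Qed.

Lemma driven_upper t i a :
  (t < T)%nat -> (i < n)%nat -> c3_free n r omega (x t) i <= a ->
  x (S t) i <= Rmax 0 (a + plan NA m k eta dl t i + dl).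
Proof.
  intros Ht Hi Ha. destruct (x_driven t Ht) as (b & Hb & Hx).
  rewrite Hx, C3_update_free by auto. eapply Rle_trans; [apply proj01_le|].
  apply Rle_max_compat_l. specialize (Hb i Hi). lra.
Qed.

Lemma push_down_to_zero :
  0 < eta - 2 * dl -> (1 <= NA)%nat -> 1 <= INR NA * (eta - 2 * dl) -> (NA <= T)%nat ->
  in_cube n (x O) -> forall i, (i < n)%nat -> x NA i = 0.
Proof.
  intros Hgap HNA1 HNA HNT Hx0. remember (eta - 2 * dl) as a eqn:Ha.
  assert (Hdecay : forall s, (s <= NA)%nat -> forall i, (i < n)%nat ->
                     x s i <= Rmax 0 (1 - INR s * a)).
  { induction s as [|s IH]; intros Hs i Hi.
    - destruct (Hx0 i Hi). unfold Rmax. simpl INR. destruct Rle_dec; lra.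
    - eapply Rle_trans.
      + apply (driven_upper s i (Rmax 0 (1 - INR s * a))); [lia| exact Hi|].
        apply c3_free_le; auto. intros j Hj. apply IH; [lia| exact Hj].
      + rewrite plan_before, S_INR by lia.
        replace ((INR s + 1) * a) with (INR s * a + a) by ring.
        unfold Rmax. repeat destruct Rle_dec; lra. }
  intros i Hi. pose proof (Hdecay NA (le_n _) i Hi) as Hle.
  rewrite Rmax_left in Hle by lra.
  pose proof (driven_in_cube (pred NA) i ltac:(lia) Hi) as Hcube.
  rewrite Nat.succ_pred_pos in Hcube by lia. lra.
Qed.

Lemma split_from_consensus :
  (NA + 2 <= T)%nat -> (k < n)%nat -> 0 <= m <= 1 ->
  (forall i, (i < n)%nat -> x NA i = 0) ->
  Rmin 1 (m + eta - 3 * dl) <= x (S (S NA)) k /\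
  forall j, (j < n)%nat -> j <> k -> x (S (S NA)) j <= Rmax 0 (m - eta + 3 * dl).
Proof.
  intros HT Hk Hm Hzero.
  assert (Hmid : forall i, (i < n)%nat -> m - dl <= x (S NA) i <= m + dl).
  { intros i Hi. split.
    - pose proof (driven_lower NA i 0 ltac:(lia) Hi) as H.
      rewrite plan_at, Rmin_right in H by lra. apply Rle_trans with (0 + m - dl); [lra|].
      apply H, c3_free_ge; auto. intros j Hj. rewrite Hzero by exact Hj. lra.
    - pose proof (driven_upper NA i 0 ltac:(lia) Hi) as H.
      rewrite plan_at, Rmax_right in H by lra. apply Rle_trans with (0 + m + dl); [|lra].
      apply H, c3_free_le; auto. intros j Hj. rewrite Hzero by exact Hj. lra. }
  split.
  - replace (m + eta - 3 * dl) with ((m - dl) + plan NA m k eta dl (S NA) k - dl)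
      by (rewrite plan_leader by lia; ring).
    apply driven_lower; [lia| exact Hk|]. apply c3_free_ge; auto.
    intros j Hj. apply Hmid, Hj.
  - intros j Hj Hjk.
    replace (m - eta + 3 * dl) with ((m + dl) + plan NA m k eta dl (S NA) j + dl)
      by (rewrite plan_follower by lia; ring).
    apply driven_upper; [lia| exact Hj|]. apply c3_free_le; auto.
    intros i Hi. apply Hmid, Hi.
Qed.

Section Escape.

Variables (c gam : R).
Hypothesis k_lt : (k < n)%nat.
Hypothesis leader_gain : leader_rate n omega k * c <= eta - 2 * gam.
Hypothesis follower_gain : c / INR n <= eta - 2 * gam.
Hypothesis dl_gam : 2 * dl <= gam.
Hypothesis c_le1 : c <= 1.
Hypothesis r_leader : r k < 2 * eta - 8 * dl.
Hypothesis r_lower : forall i, (i < n)%nat -> 2 * dl <= r i.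

Lemma leader_rate_unit : 0 <= leader_rate n omega k <= 1.
Proof.
  assert (Hn : 1 <= INR n) by (apply (le_INR 1); lia).
  destruct (omega_unit k k_lt). unfold leader_rate.
  split; [apply le_div_of_mul_le| apply div_le_of_le_mul]; nra.
Qed.

(* The leader is out of everybody's reach, so it keeps a share [1 - leader_rate] of its
   state and gains [eta - 2 dl] from the control. *)
Lemma leader_step t Z l :
  (NA < t)%nat -> (t < T)%nat ->
  (forall i, (i < n)%nat -> i <> k -> 0 <= x t i <= Z) -> Z <= 2 * dl ->
  2 * eta - 6 * dl <= l -> l <= c -> l <= x t k ->
  Rmin c (l + gam) <= x (S t) k.
Proof.
  intros HNt HtT Hfoll HZ Hl Hlc Hlx.
  pose proof (r_nonneg k k_lt). pose proof leader_rate_unit as Hrate.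
  set (beta := leader_rate n omega k) in *.
  assert (Hfree : (1 - beta) * x t k <= c3_free n r omega (x t) k).
  { apply c3_free_leader; auto; [apply omega_unit, k_lt| lra|].
    intros i Hi Hik. pose proof (Hfoll i Hi Hik). split; lra. }
  pose proof (driven_lower t k _ HtT k_lt Hfree) as Hstep.
  rewrite plan_leader in Hstep by exact HNt.
  assert ((1 - beta) * l <= (1 - beta) * x t k) by (apply Rmult_le_compat_l; lra).
  assert (beta * l <= beta * c) by (apply Rmult_le_compat_l; lra).
  eapply Rle_trans; [|exact Hstep]. unfold Rmin. repeat destruct Rle_dec; nra.
Qed.

(* The follower sees at most the average of the others, which the leader raises by less than
   [c / n] since the spread is below [c]. *)
Lemma follower_step t Z j :
  (NA < t)%nat -> (t < T)%nat -> (j < n)%nat -> j <> k ->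
  (forall i, (i < n)%nat -> i <> k -> 0 <= x t i <= Z) -> Z <= x t k -> Z <= r j ->
  x t k - Z < c -> x (S t) j <= Rmax 0 (Z - gam).
Proof.
  intros HNt HtT Hj Hjk Hfoll HZk HZr Hspread.
  assert (Hn : 0 < INR n) by (apply lt_0_INR; lia).
  pose proof (c3_free_follower n r omega (x t) k j Z k_lt Hj Hjk (omega_unit j Hj) HZr Hfoll HZk)
    as Hfree.
  pose proof (driven_upper t j _ HtT Hj Hfree) as Hstep.
  rewrite plan_follower in Hstep by assumption.
  assert ((x t k - Z) / INR n < c / INR n)
    by (apply Rmult_lt_compat_r; [apply Rinv_0_lt_compat|]; lra).
  eapply Rle_trans; [exact Hstep|]. apply Rle_max_compat_l. lra.
Qed.

Lemma leader_escapes t0 NC j0 :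
  (NA < t0)%nat -> (t0 + NC <= T)%nat -> (j0 < n)%nat -> j0 <> k ->
  1 <= INR NC * gam ->
  2 * eta - 4 * dl <= x t0 k -> (forall i, (i < n)%nat -> i <> k -> x t0 i <= 2 * dl) ->
  exists s, (s <= NC)%nat /\ c <= spread n (x (t0 + s)%nat).
Proof.
  intros HNt0 HT Hj0 Hj0k HNC Hlead0 Hfoll0.
  destruct (classic (exists s, (s <= NC)%nat /\ c <= spread n (x (t0 + s)%nat)))
    as [Hreached|Hnot]; [exact Hreached| exfalso].
  assert (Hbelow : forall s, (s <= NC)%nat -> spread n (x (t0 + s)%nat) < c).
  { intros s Hs. apply Rnot_le_lt. intros Hc. apply Hnot. exists s. auto. }
  assert (Hcube : forall s i, (s <= NC)%nat -> (i < n)%nat -> 0 <= x (t0 + s)%nat i <= 1).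
  { intros s i Hs Hi. replace (t0 + s)%nat with (S (t0 - 1 + s)) by lia.
    apply driven_in_cube; [lia| exact Hi]. }
  assert (Hgap : forall s, (s <= NC)%nat -> x (t0 + s)%nat k - x (t0 + s)%nat j0 < c).
  { intros s Hs. pose proof (spread_ge n (x (t0 + s)%nat) k j0 k_lt Hj0).
    pose proof (Rle_abs (x (t0 + s)%nat k - x (t0 + s)%nat j0)). pose proof (Hbelow s Hs). lra. }
  assert (Hc : 2 * eta - 6 * dl < c).
  { pose proof (Hgap 0%nat (Nat.le_0_l _)). rewrite Nat.add_0_r in H.
    pose proof (Hfoll0 j0 Hj0 Hj0k). lra. }
  assert (Hgam : 0 <= gam) by lra.
  assert (Hinv : forall s, (s <= NC)%nat ->
            Rmin c (2 * eta - 4 * dl + INR s * gam) <= x (t0 + s)%nat k /\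
            forall i, (i < n)%nat -> i <> k ->
              x (t0 + s)%nat i <= Rmax 0 (2 * dl - INR s * gam)).
  { induction s as [|s IH]; intros Hs.
    - rewrite Nat.add_0_r. simpl INR. rewrite Rmult_0_l, Rplus_0_r, Rminus_0_r. split.
      + eapply Rle_trans; [apply Rmin_r| exact Hlead0].
      + intros i Hi Hik. eapply Rle_trans; [apply Hfoll0; assumption| apply Rmax_r].
    - destruct (IH ltac:(lia)) as [Hlead Hfoll].
      set (Z := Rmax 0 (2 * dl - INR s * gam)) in *.
      set (l := Rmin c (2 * eta - 4 * dl + INR s * gam)) in *.
      assert (HsG : 0 <= INR s * gam) by (apply Rmult_le_pos; [apply pos_INR| exact Hgam]).
      assert (HZ : 0 <= Z <= 2 * dl) by (unfold Z, Rmax; destruct Rle_dec; lra).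
      assert (Hl : 2 * eta - 6 * dl <= l) by (unfold l, Rmin; destruct Rle_dec; lra).
      assert (Hfoll' : forall i, (i < n)%nat -> i <> k -> 0 <= x (t0 + s)%nat i <= Z).
      { intros i Hi Hik. split; [apply (Hcube s i); [lia| exact Hi]| apply Hfoll; auto]. }
      replace (t0 + S s)%nat with (S (t0 + s)) by lia. rewrite S_INR.
      replace ((INR s + 1) * gam) with (INR s * gam + gam) by ring.
      split.
      + eapply Rle_trans.
        2: apply (leader_step (t0 + s) Z l); [lia| lia| exact Hfoll'| lra| exact Hl| apply Rmin_l| exact Hlead].
        unfold l, Rmin. repeat destruct Rle_dec; lra.
      + intros i Hi Hik.
        eapply Rle_trans; [apply (follower_step (t0 + s) Z i); [lia| lia| exact Hi| exact Hik| exact Hfoll'| ..]|].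
        * pose proof (r_nonneg k k_lt). lra.
        * pose proof (r_lower i Hi). lra.
        * pose proof (Hgap s ltac:(lia)). pose proof (Hfoll' j0 Hj0 Hj0k). lra.
        * unfold Z, Rmax. repeat destruct Rle_dec; lra. }
  destruct (Hinv NC (le_n _)) as [Hlead Hfoll].
  assert (HNC1 : (1 <= NC)%nat) by (destruct NC; [simpl in HNC; lra| lia]).
  assert (gam <= INR NC * gam)
    by (rewrite <- (Rmult_1_l gam) at 1; apply Rmult_le_compat_r; [exact Hgam| apply (le_INR 1), HNC1]).
  pose proof (r_nonneg k k_lt).
  rewrite Rmin_left in Hlead by lra.
  rewrite Rmax_left in Hfoll by lra.
  pose proof (Hfoll j0 Hj0 Hj0k). pose proof (Hgap NC (le_n _)). lra.
Qed.

End Escape.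

End Plan.

Lemma reachable_large_eta n r omega eta c :
  (2 <= n)%nat -> (forall i, (i < n)%nat -> 0 <= r i) ->
  (forall i, (i < n)%nat -> 0 <= omega i <= 1) -> 1/2 < eta -> c <= 1 ->
  robustly_reachable n r omega eta (E_set n c).
Proof.
  intros Hn Hr Ho Heta Hc.
  set (dl := (eta - 1/2) / 3).
  destruct (archimedean_count (eta - 2 * dl)) as (NA & HNA1 & HNA); [unfold dl; lra|].
  apply (plan_reachable n r omega eta _ (NA + 2) dl NA (1/2) 0);
    [lia| unfold dl; lra| unfold dl; lra|].
  intros x Hx0 Hdrv.
  pose proof (push_down_to_zero n r omega eta dl NA (1/2) 0 (NA + 2) x Hr Ho Hdrv
    ltac:(unfold dl; lra) HNA1 HNA ltac:(lia) Hx0) as Hzero.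
  destruct (split_from_consensus n r omega eta dl NA (1/2) 0 (NA + 2) x Hr Ho
    ltac:(unfold dl; lra) Hdrv ltac:(lia) ltac:(lia) ltac:(lra) Hzero) as [Hlead Hfoll].
  rewrite Rmin_left in Hlead by (unfold dl; lra).
  rewrite Rmax_left in Hfoll by (unfold dl; lra).
  exists (S (S NA)). split; [lia|].
  apply (driven_E_set n r omega eta dl NA (1/2) 0 (NA + 2) x Hdrv); [lia|].
  pose proof (spread_ge n (x (S (S NA))) 0 1 ltac:(lia) ltac:(lia)).
  pose proof (Rle_abs (x (S (S NA)) 0%nat - x (S (S NA)) 1%nat)).
  pose proof (Hfoll 1%nat ltac:(lia) ltac:(lia)). lra.
Qed.

Lemma reachable_small_eta n r omega eta k rho eps c :
  (2 <= n)%nat -> 0 < rho -> (forall i, (i < n)%nat -> rho <= r i) ->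
  (forall i, (i < n)%nat -> 0 <= omega i <= 1) -> 0 < omega k ->
  0 < eta <= 1/2 -> (k < n)%nat -> r k < 2 * eta -> 0 < eps ->
  leader_rate n omega k * (c + eps) <= eta -> c + eps <= INR n * eta -> c <= 1 ->
  robustly_reachable n r omega eta (E_set n c).
Proof.
  intros Hn Hrho0 Hrho Ho Hok Heta Hk Hrk Heps Hleader Hfollower Hc.
  assert (Hr : forall i, (i < n)%nat -> 0 <= r i) by (intros i Hi; specialize (Hrho i Hi); lra).
  assert (Hn2 : 2 <= INR n) by (apply (le_INR 2); lia).
  set (beta := leader_rate n omega k) in *.
  assert (Hbeta : 0 < beta).
  { unfold beta, leader_rate, Rdiv.
    apply Rmult_lt_0_compat; [apply Rmult_lt_0_compat; lra| apply Rinv_0_lt_compat; lra]. }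
  assert (Heps_n : 0 < eps / INR n) by (apply Rdiv_lt_0_compat; lra).
  set (gam := Rmin (beta * eps) (eps / INR n) / 2).
  assert (Hgam : 0 < gam /\ 2 * gam <= beta * eps /\ 2 * gam <= eps / INR n).
  { unfold gam. pose proof (Rmin_l (beta * eps) (eps / INR n)).
    pose proof (Rmin_r (beta * eps) (eps / INR n)).
    assert (0 < Rmin (beta * eps) (eps / INR n)) by (apply Rmin_glb_lt; nra). lra. }
  set (dl := Rmin (Rmin (eta / 4) (gam / 2)) (Rmin ((2 * eta - r k) / 9) (rho / 2))).
  assert (Hdl : 0 < dl /\ dl <= eta / 4 /\ dl <= gam / 2 /\ dl <= (2 * eta - r k) / 9 /\
                dl <= rho / 2).
  { unfold dl. pose proof (Rmin_l (eta / 4) (gam / 2)). pose proof (Rmin_r (eta / 4) (gam / 2)).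
    pose proof (Rmin_l ((2 * eta - r k) / 9) (rho / 2)).
    pose proof (Rmin_r ((2 * eta - r k) / 9) (rho / 2)).
    pose proof (Rmin_l (Rmin (eta / 4) (gam / 2)) (Rmin ((2 * eta - r k) / 9) (rho / 2))).
    pose proof (Rmin_r (Rmin (eta / 4) (gam / 2)) (Rmin ((2 * eta - r k) / 9) (rho / 2))).
    repeat split; try lra. repeat apply Rmin_glb_lt; lra. }
  destruct (archimedean_count (eta - 2 * dl)) as (NA & HNA1 & HNA); [lra|].
  destruct (archimedean_count gam) as (NC & _ & HNC); [lra|].
  set (T := (NA + 2 + NC)%nat).
  apply (plan_reachable n r omega eta _ T dl NA (eta - dl) k); [unfold T; lia| lra| lra|].
  intros x Hx0 Hdrv.
  pose proof (push_down_to_zero n r omega eta dl NA (eta - dl) k T x Hr Ho Hdrv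
    ltac:(lra) HNA1 HNA ltac:(unfold T; lia) Hx0) as Hzero.
  destruct (split_from_consensus n r omega eta dl NA (eta - dl) k T x Hr Ho
    ltac:(lra) Hdrv ltac:(unfold T; lia) Hk ltac:(lra) Hzero) as [Hlead Hfoll].
  rewrite Rmin_right in Hlead by lra. rewrite Rmax_right in Hfoll by lra.
  set (j0 := if (k =? 0)%nat then 1%nat else 0%nat).
  assert (Hj0 : (j0 < n)%nat /\ j0 <> k)
    by (unfold j0; destruct (Nat.eqb_spec k 0); split; lia).
  assert (Hleader_gain : beta * c <= eta - 2 * gam)
    by (rewrite Rmult_plus_distr_l in Hleader; lra).
  assert (Hfollower_gain : c / INR n <= eta - 2 * gam).
  { apply div_le_of_le_mul; [lra|].
    assert (2 * gam * INR n <= eps).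
    { replace eps with (eps / INR n * INR n) by (field; lra).
      apply Rmult_le_compat_r; lra. }
    nra. }
  assert (Hr_lower : forall i, (i < n)%nat -> 2 * dl <= r i)
    by (intros i Hi; specialize (Hrho i Hi); lra).
  replace (eta - dl - eta + 3 * dl) with (2 * dl) in Hfoll by ring.
  destruct (leader_escapes n r omega eta dl NA (eta - dl) k T x Hr Ho ltac:(lra) Hdrv c gam Hk
              Hleader_gain Hfollower_gain ltac:(lra) Hc ltac:(lra) Hr_lower (S (S NA)) NC j0
              ltac:(lia) ltac:(unfold T; lia) (proj1 Hj0) (proj2 Hj0) HNC ltac:(lra) Hfoll)
    as (s & Hs & Hspread).
  exists (S (S NA) + s)%nat. split; [unfold T; lia|].
  apply (driven_E_set n r omega eta dl NA (eta - dl) k T x Hdrv (S NA + s)); [unfold T; lia|].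
  exact Hspread.
Qed.

Lemma leader_rate_budget n omega k eta c :
  (2 <= n)%nat -> 0 < omega k ->
  c <= INR n * eta / ((INR n - 1) * omega k) -> leader_rate n omega k * c <= eta.
Proof.
  intros Hn Hok Hc. assert (Hn2 : 2 <= INR n) by (apply (le_INR 2); lia).
  assert (Hrate : 0 <= leader_rate n omega k).
  { unfold leader_rate. apply le_div_of_mul_le; nra. }
  apply Rle_trans with (leader_rate n omega k * (INR n * eta / ((INR n - 1) * omega k))).
  - apply Rmult_le_compat_l; assumption.
  - unfold leader_rate. right. field. repeat split; lra.
Qed.

Lemma r_min_spec n r :
  (0 < n)%nat ->
  exists i0, (i0 < n)%nat /\ r_min n r = r i0 /\ forall i, (i < n)%nat -> r_min n r <= r i.
Proof.
  intros Hn. destruct (min_over_attained n (fun _ => true) r 0 Hn eq_refl)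
    as (i0 & Hi0 & _ & Heq & Hle).
  exists i0. unfold r_min. rewrite Heq. auto.
Qed.

Lemma omega_low_spec n r omega eta i0 :
  (i0 < n)%nat -> r i0 < 2 * eta ->
  exists k, (k < n)%nat /\ r k < 2 * eta /\ omega_low n r omega eta = omega k.
Proof.
  intros Hi0 Hri0.
  destruct (min_over_attained n (fun i => if Rlt_dec (r i) (2 * eta) then true else false)
              omega i0 Hi0) as (k & Hk & Hrk & Heq & _).
  { destruct Rlt_dec; [reflexivity| lra]. }
  exists k. split; [exact Hk|]. split; [destruct Rlt_dec; [assumption| discriminate]| exact Heq].
Qed.

Lemma c_eps_spec n r omega eta eps :
  c_eps n r omega eta eps + eps <= INR n * eta / ((INR n - 1) * omega_low n r omega eta) /\
  c_eps n r omega eta eps + eps <= INR n * eta /\ c_eps n r omega eta eps <= 1.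
Proof.
  unfold c_eps. set (a := INR n * eta / ((INR n - 1) * omega_low n r omega eta) - eps).
  pose proof (Rmin_l (Rmin a (INR n * eta - eps)) 1). pose proof (Rmin_r (Rmin a (INR n * eta - eps)) 1).
  pose proof (Rmin_l a (INR n * eta - eps)). pose proof (Rmin_r a (INR n * eta - eps)).
  unfold a in *. lra.
Qed.

Theorem lemma5 (n : nat) (r omega : nat -> R) (eta : R) :
  (3 <= n)%nat ->
  (forall i, (i < n)%nat -> 0 < r i <= 1) ->
  (forall i, (i < n)%nat -> 0 < omega i < 1) ->
  0 < eta ->
  r_min n r < 1 ->
  eta > r_min n r / 2 ->
  forall eps : R, eps > 0 ->
    robustly_reachable n r omega eta (E_set n (c_eps n r omega eta eps)).
Proof.
  intros Hn Hr Ho Heta _ Hrmin eps Heps.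
  assert (Hr0 : forall i, (i < n)%nat -> 0 <= r i) by (intros i Hi; specialize (Hr i Hi); lra).
  assert (Ho1 : forall i, (i < n)%nat -> 0 <= omega i <= 1)
    by (intros i Hi; specialize (Ho i Hi); lra).
  destruct (c_eps_spec n r omega eta eps) as (Hc_leader & Hc_follower & Hc1).
  destruct (Rlt_or_le (1/2) eta) as [Hlarge|Hsmall].
  { apply reachable_large_eta; auto. lia. }
  destruct (r_min_spec n r ltac:(lia)) as (i0 & Hi0 & Hrmin_eq & Hrmin_le).
  destruct (omega_low_spec n r omega eta i0 Hi0 ltac:(lra)) as (k & Hk & Hrk & Hlow).
  rewrite Hlow in Hc_leader.
  pose proof (Hr i0 Hi0). pose proof (Ho k Hk).
  apply (reachable_small_eta n r omega eta k (r_min n r) eps); auto; try lra; try lia.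
  apply leader_rate_budget; [lia| lra| exact Hc_leader].
Qed.
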